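(* Let $n\ge1$. For every rectangular permutation $\pi\in S_n$ there is exactly one pair $(x,\sigma)$ with $x\in\{1,2,u,d\}$ and $\sigma$ a rectangular permutation in $S_{n-1}$ lying in the domain of $\psi_x$, such that $\pi=\psi_x(\sigma)$.
   Context: A permutation is rectangular if it avoids the patterns $2413,2431,4213,4231$; $S_0=\{e_0\}$ contains only the empty permutation. For $\pi\in S_n$ (one-line form) and $1\le i,j\le n+1$, $\rho_{i,j}(\pi)\in S_{n+1}$ is obtained by increasing by $1$ every entry $\ge i$ and inserting the value $i$ at position $j$. Operators: $\psi_1=\rho_{1,1}$, domain all rectangular permutations (including $e_0$); $\psi_2=\rho_{1,2}$, domain rectangular $\pi$ of size $\ge1$ with $\pi_1\ne1$; $\psi_u(\pi)=\rho_{\pi_1,1}(\pi)$, domain rectangular $\pi$ of size $\ge1$ with $\pi_1\neq1$; $\psi_d(\pi)=\rho_{\pi_1+1,1}(\pi)$, domain rectangular $\pi$ of size $\ge1$. *)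

From mathcomp Require Import all_boot.
Set Implicit Arguments. Unset Strict Implicit. Unset Printing Implicit Defensive.

(* Permutations in one-line form: a permutation of S_n is a sequence of
   naturals that is a rearrangement of [1; 2; ...; n]. S_0 = {[::]}. *)
Definition is_perm (n : nat) (s : seq nat) : Prop := perm_eq s (iota 1 n).

Definition order_iso (t p : seq nat) : Prop :=
  size t = size p /\
  forall i j, i < size t -> j < size t ->
    (nth 0 t i < nth 0 t j) = (nth 0 p i < nth 0 p j).

Definition contains (s p : seq nat) : Prop :=
  exists m : bitseq, size m = size s /\ order_iso (mask m s) p.

Definition avoids (s p : seq nat) : Prop := ~ contains s p.

Definition rectangular (s : seq nat) : Prop :=
  avoids s [:: 2; 4; 1; 3] /\ avoids s [:: 2; 4; 3; 1] /\
  avoids s [:: 4; 2; 1; 3] /\ avoids s [:: 4; 2; 3; 1].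

(* rho_{i,j}: increase by 1 every entry >= i, then insert value i at
   (1-indexed) position j. *)
Definition rho (i j : nat) (s : seq nat) : seq nat :=
  let s' := [seq (if i <= x then x.+1 else x) | x <- s] in
  take j.-1 s' ++ i :: drop j.-1 s'.

Inductive op := op1 | op2 | opu | opd.

Definition first (s : seq nat) : nat := head 0 s.

Definition psi (x : op) (s : seq nat) : seq nat :=
  match x with
  | op1 => rho 1 1 s
  | op2 => rho 1 2 s
  | opu => rho (first s) 1 s
  | opd => rho (first s).+1 1 s
  end.

Definition in_domain (x : op) (s : seq nat) : Prop :=
  rectangular s /\
  match x with
  | op1 => True
  | op2 => 1 <= size s /\ first s <> 1
  | opu => 1 <= size s /\ first s <> 1
  | opd => 1 <= size s
  end.

From mathcomp Require Import all_boot zify.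
Set Implicit Arguments. Unset Strict Implicit.

(* rho_{i,j} is undone by deleting the entry i at position j and standardizing
   the rest with unbump i; standardization preserves pattern avoidance, so the
   result is again rectangular.  The operator is read off the first two entries
   a b of pi: a = 1 gives psi_1, b = a + 1 gives psi_u, a = b + 1 gives psi_d.
   Otherwise rectangularity forces b = 1, i.e. psi_2: if b <> 1, the values
   min(a, b) + 1 and 1 both occur after a b, and in either order they complete
   a b to one of 2413, 2431, 4213, 4231. *)

Definition insert_nth (j x : nat) (s : seq nat) : seq nat := take j s ++ x :: drop j s.

Lemma insert_nth0 x s : insert_nth 0 x s = x :: s.
Proof. by rewrite /insert_nth take0 drop0. Qed.

Lemma insert_nthS j x a s : insert_nth j.+1 x (a :: s) = a :: insert_nth j x s.
Proof. by []. Qed.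

Lemma perm_insert_nth j x s : perm_eq (insert_nth j x s) (x :: s).
Proof. by rewrite /insert_nth -cat1s perm_catCA cat_take_drop. Qed.

Lemma subseq_insert_nth j x s : subseq s (insert_nth j x s).
Proof.
by rewrite -{1}(cat_take_drop j s) cat_subseq ?subseq_refl ?subseq_cons.
Qed.

Lemma insert_nthK j x s :
  j <= size s -> take j (insert_nth j x s) ++ drop j.+1 (insert_nth j x s) = s.
Proof.
move=> le_j_s; have size_take_j : size (take j s) = j by rewrite size_takel.
rewrite /insert_nth take_size_cat // -cat_rcons drop_size_cat ?size_rcons ?size_take_j //.
exact: cat_take_drop.
Qed.

Lemma rhoE i j s : rho i j s = insert_nth j.-1 i (map (bump i) s).
Proof.
by rewrite /rho /insert_nth (@eq_map _ _ _ (bump i)) // => x; rewrite /bump; case: leqP.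
Qed.

Lemma rho_unbump i j s :
  i \notin s -> rho i j (map (unbump i) s) = insert_nth j.-1 i s.
Proof.
move=> /memPn s_neq_i; rewrite rhoE -map_comp map_id_in // => x /s_neq_i.
exact: unbumpK.
Qed.

Definition unrho (i j : nat) (t : seq nat) : seq nat :=
  map (unbump i) (take j.-1 t ++ drop j t).

Lemma rhoK i j s : 0 < j <= (size s).+1 -> unrho i j (rho i j s) = s.
Proof.
case: j => // j /= le_j_s; rewrite /unrho rhoE /= insert_nthK ?size_map //.
by rewrite -map_comp map_id_in // => x _; apply: bumpK.
Qed.

Lemma is_permP n s :
  is_perm n s <-> uniq s /\ forall x, (x \in s) = (0 < x <= n).
Proof.
split=> [perm_s | [uniq_s mem_s]].
  rewrite (perm_uniq perm_s) iota_uniq; split=> // x.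
  by rewrite (perm_mem perm_s) mem_iota; lia.
by apply: uniq_perm; rewrite ?iota_uniq // => x; rewrite mem_s mem_iota; lia.
Qed.

Lemma is_perm_unbump n k s : is_perm n (k :: s) -> is_perm n.-1 (map (unbump k) s).
Proof.
case/is_permP=> /= /andP [/memPn s_neq_k uniq_s] mem_ks.
have k_range : 0 < k <= n by rewrite -mem_ks mem_head.
apply/is_permP; split.
  rewrite map_inj_in_uniq // => x y /s_neq_k x_neq_k /s_neq_k y_neq_k eq_xy.
  by rewrite -(unbumpK x_neq_k) eq_xy unbumpK.
move=> x; apply/mapP/idP => [[y y_in_s ->] | x_range].
  have := mem_ks y; rewrite inE y_in_s orbT => /esym y_range.
  have := s_neq_k y y_in_s; rewrite /unbump; case: ltnP; lia.
exists (bump k x); last by rewrite bumpK.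
have := mem_ks (bump k x); rewrite inE eq_sym (negbTE (neq_bump k x)) /= => ->.
rewrite /bump; case: leqP; lia.
Qed.

Lemma containsP s p : contains s p <-> exists2 u, subseq u s & order_iso u p.
Proof.
split=> [[m [_ iso]] | [u /subseqP [m size_m ->] iso]]; last by exists m.
by exists (mask m s); first exact: mask_subseq.
Qed.

Lemma contains_subseq s t p : subseq s t -> contains s p -> contains t p.
Proof.
move=> sub_st /containsP [u sub_us iso]; apply/containsP.
by exists u; first exact: subseq_trans sub_us sub_st.
Qed.

Lemma order_iso_map f t p :
  {in t &, {mono f : x y / x < y}} -> order_iso (map f t) p -> order_iso t p.
Proof.
move=> mono_f [size_ft iso]; split=> [|i j i_lt j_lt]; first by rewrite -size_ft size_map.
by rewrite -iso ?size_map // !(nth_map 0) // mono_f ?mem_nth.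
Qed.

Lemma contains_map f s p :
  {in s &, {mono f : x y / x < y}} -> contains (map f s) p -> contains s p.
Proof.
move=> mono_f /containsP [_ /subseqP [m _ ->]]; rewrite -map_mask => iso.
apply/containsP; exists (mask m s); first exact: mask_subseq.
by apply: order_iso_map iso => x y /mem_mask x_in_s /mem_mask y_in_s; apply: mono_f.
Qed.

Lemma rectangular_contains s t :
  (forall p, contains s p -> contains t p) -> rectangular t -> rectangular s.
Proof. by move=> st [? [? [? ?]]]; split; [|split; [|split]] => /st. Qed.

Lemma rectangular_subseq s t : subseq s t -> rectangular t -> rectangular s.
Proof. by move=> sub_st; apply: rectangular_contains => p; apply: contains_subseq. Qed.

Lemma rectangular_map f s :
  {in s &, {mono f : x y / x < y}} -> rectangular s -> rectangular (map f s).
Proof. by move=> mono_f; apply: rectangular_contains => p; apply: contains_map. Qed.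

Lemma unbump_mono k : {in predC1 k &, {mono unbump k : x y / x < y}}.
Proof.
move=> x y x_neq_k y_neq_k.
by rewrite -[in RHS](unbumpK x_neq_k) -[in RHS](unbumpK y_neq_k) !ltnNge leq_bump2.
Qed.

Lemma rho_delete n i j s :
  is_perm n (insert_nth j i s) -> rectangular (insert_nth j i s) ->
  [/\ is_perm n.-1 (map (unbump i) s), rectangular (map (unbump i) s)
    & rho i j.+1 (map (unbump i) s) = insert_nth j i s].
Proof.
move=> perm_pi rect_pi.
have perm_is : is_perm n (i :: s).
  by rewrite /is_perm -(permPl (perm_insert_nth j i s)).
have [/andP [i_notin_s _] _] := (is_permP n (i :: s)).1 perm_is.
split; [exact: is_perm_unbump | | exact: rho_unbump].
apply: rectangular_map (rectangular_subseq (subseq_insert_nth j i s) rect_pi).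
by move=> x y x_in_s y_in_s; apply: unbump_mono; apply: (memPn i_notin_s).
Qed.

Lemma subseq_pair (x y : nat) t :
  x \in t -> y \in t -> x != y -> subseq [:: x; y] t || subseq [:: y; x] t.
Proof.
elim: t => [|z t IHt] //=; rewrite !inE.
case: (eqVneq x z) => [->|_]; case: (eqVneq y z) => [->|_] //=.
- by move=> _ y_in_t _; rewrite sub1seq y_in_t.
- by move=> x_in_t _ _; rewrite sub1seq x_in_t orbT.
Qed.

Lemma contains_cons2 a b x y t p :
  subseq [:: x; y] t -> order_iso [:: a; b; x; y] p -> contains [:: a, b & t] p.
Proof. by move=> sub_xy iso; apply/containsP; exists [:: a; b; x; y]; rewrite //= !eqxx. Qed.

Lemma rectangular_second_entry n a b t :
  is_perm n [:: a, b & t] -> rectangular [:: a, b & t] ->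
  a != 1 -> b != a.+1 -> a != b.+1 -> b = 1.
Proof.
case/is_permP=> uniq_pi mem_pi [R2413 [R2431 [R4213 R4231]]] a_neq1 b_nsucc a_nsucc.
apply/eqP/negPn/negP => b_neq1.
move: uniq_pi => /= /and3P [/norP [a_neq_b _] _ _].
have mem_t c : 0 < c <= n -> c != a -> c != b -> c \in t.
  move=> c_range /negbTE c_neq_a /negbTE c_neq_b.
  by move: (mem_pi c); rewrite !inE c_neq_a c_neq_b c_range /= => ->.
have [a_range b_range] : 0 < a <= n /\ 0 < b <= n.
  by rewrite -!mem_pi !inE !eqxx orbT.
pose c := (minn a b).+1.
have c_in_t : c \in t by apply: mem_t; rewrite /c; lia.
have one_in_t : 1 \in t by apply: mem_t; lia.
have c_neq1 : c != 1 by rewrite /c; lia.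
case/orP: (subseq_pair c_in_t one_in_t c_neq1) => sub;
  case: (ltnP a b) => ab; [apply: R2431 | apply: R4231 | apply: R2413 | apply: R4213];
  apply: (contains_cons2 sub); split=> // -[|[|[|[|i]]]] -[|[|[|[|j]]]] //= _ _;
  rewrite /c; apply/idP/idP; lia.
Qed.

Definition psi_op (t : seq nat) : op :=
  if t is a :: b :: _ then
    if a == 1 then op1 else if b == a.+1 then opu else if a == b.+1 then opd else op2
  else op1.

Definition unpsi (x : op) (t : seq nat) : seq nat :=
  match x with
  | op1 => unrho 1 1 t
  | op2 => unrho 1 2 t
  | opu | opd => unrho (first t) 1 t
  end.

Lemma rho1E i s : rho i 1 s = i :: map (bump i) s.
Proof. by rewrite rhoE insert_nth0. Qed.

Lemma rho2E i a s : rho i 2 (a :: s) = [:: bump i a, i & map (bump i) s].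
Proof. by rewrite rhoE insert_nthS insert_nth0. Qed.

Lemma first_rho1 i s : first (rho i 1 s) = i.
Proof. by rewrite rho1E. Qed.

Lemma unpsiK x s : in_domain x s -> unpsi x (psi x s) = s.
Proof. by case: x => -[_ dom_s]; rewrite /= ?first_rho1 rhoK //; case: dom_s. Qed.

Lemma psi_opK x s : in_domain x s -> 0 \notin s -> psi_op (psi x s) = x.
Proof.
case=> _; case: x => /=; first by rewrite rho1E; case: s.
- case: s => [|s1 s] [] // _ /eqP s1_neq1.
  rewrite rho2E inE eq_sym negb_or => /andP [s1_neq0 _].
  have -> : bump 1 s1 = s1.+1 by rewrite /bump lt0n s1_neq0.
  by rewrite /= !eqSS (negbTE s1_neq0) (negbTE s1_neq1).
- case: s => [|s1 s] [] // _ /eqP s1_neq1 _.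
  by rewrite rho1E /= /bump leqnn (negbTE s1_neq1) eqxx.
- case: s => [|s1 s] // _; rewrite inE eq_sym negb_or => /andP [s1_neq0 _].
  by rewrite rho1E /= /bump ltnn !eqSS (negbTE s1_neq0) (ltn_eqF (leqnSn s1.+1)) eqxx.
Qed.

Lemma rho_delete_head n a t : is_perm n (a :: t) -> rectangular (a :: t) ->
  [/\ is_perm n.-1 (map (unbump a) t), rectangular (map (unbump a) t)
    & rho a 1 (map (unbump a) t) = a :: t].
Proof. by rewrite -insert_nth0; apply: rho_delete. Qed.

Lemma psi_surj n pi : 0 < n -> is_perm n pi -> rectangular pi ->
  exists x s, [/\ is_perm n.-1 s, in_domain x s & pi = psi x s].
Proof.
move=> n_gt0 perm_pi rect_pi; have [_ mem_pi] := (is_permP n pi).1 perm_pi.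
case: pi => [|a t] in perm_pi rect_pi mem_pi *.
  by have := mem_pi n; rewrite in_nil; lia.
have [perm_s rect_s rho_s] := rho_delete_head perm_pi rect_pi.
have [a_eq1 | a_neq1] := eqVneq a 1.
  by subst a; exists op1, (map (unbump 1) t); split=> //; split.
case: t => [|b t] in perm_pi rect_pi mem_pi perm_s rect_s rho_s *.
  by have := mem_pi 1; rewrite inE; lia.
have [b_succ | b_nsucc] := eqVneq b a.+1; last have [a_succ | a_nsucc] := eqVneq a b.+1.
- exists opu, (map (unbump a) (b :: t)).
  have first_s : first (map (unbump a) (b :: t)) = a.
    by rewrite /= b_succ /unbump ltnSn subn1.
  by rewrite /in_domain /psi first_s; split=> //; split=> //; split=> //; apply/eqP.
- exists opd, (map (unbump a) (b :: t)).
  have first_s : first (map (unbump a) (b :: t)) = b.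
    by rewrite /= a_succ /unbump ltnNge leqnSn subn0.
  by rewrite /psi first_s -a_succ; split=> //; split.
- have b_eq1 := rectangular_second_entry perm_pi rect_pi a_neq1 b_nsucc a_nsucc.
  rewrite b_eq1 -(insert_nth0 1 t) -insert_nthS in perm_pi rect_pi *.
  have {perm_s rect_s} [perm_s rect_s <-] := rho_delete perm_pi rect_pi.
  exists op2, (map (unbump 1) (a :: t)).
  have first_s : first (map (unbump 1) (a :: t)) = a.-1.
    by rewrite /= /unbump (_ : 1 < a) ?subn1 //; lia.
  by rewrite /in_domain first_s; split=> //; split=> //; split=> //; lia.
Qed.

Lemma is_perm_notin0 n s : is_perm n s -> 0 \notin s.
Proof. by case/is_permP=> _ ->. Qed.

Lemma psi_inj x y s t : in_domain x s -> in_domain y t -> 0 \notin s -> 0 \notin t ->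
  psi x s = psi y t -> (x, s) = (y, t).
Proof.
move=> dom_s dom_t s_notin0 t_notin0 eq_psi.
have eq_xy : x = y by rewrite -(psi_opK dom_s s_notin0) -(psi_opK dom_t t_notin0) eq_psi.
by rewrite -(unpsiK dom_s) -(unpsiK dom_t) eq_psi eq_xy.
Qed.

Theorem lemma4p2 (n : nat) (pi : seq nat) :
  1 <= n -> is_perm n pi -> rectangular pi ->
  exists! xs : op * seq nat,
    is_perm n.-1 xs.2 /\ in_domain xs.1 xs.2 /\ pi = psi xs.1 xs.2.
Proof.
move=> n_gt0 perm_pi rect_pi.
have [x [s [perm_s dom_s ->]]] := psi_surj n_gt0 perm_pi rect_pi.
exists (x, s); split=> // -[y t] /= [perm_t [dom_t eq_psi]].
exact: psi_inj dom_s dom_t (is_perm_notin0 perm_s) (is_perm_notin0 perm_t) eq_psi.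
Qed.
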